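(* Let $X$ be a topological space, let $Y$ be a Urysohn space, let $S$ be a dense subset of $X$ and let $f:S\to Y$ be continuous. Then the following are equivalent: (1) $f$ has a continuous extension to $X$; (2) for every open set $V$ of $Y$ the set $X_{\theta}(f^{-1}(V))$ is open in $X$, and for every family $\{A_\beta\}$ of closed subsets of $Y$ with $\bigcap_\beta A_\beta=\emptyset$ one has $\bigcap_\beta\overline{f^{-1}(A_\beta)}=\emptyset$ (closures in $X$).
   Context: A Urysohn space is one in which any two distinct points have open neighborhoods with disjoint closures. $\mathcal N(x)$ is the set of open neighborhoods of $x$ in $X$. For $M\subseteq Y$, the $\theta$-closure $\mathrm{cl}_\theta M$ is the set of $y\in Y$ such that $\mathrm{cl}\,U\cap M\neq\emptyset$ for every open $U\ni y$. For $V\subseteq Y$, $X_\theta(f^{-1}(V))$ is the set of points $x\in X$ with $\bigcap\{\mathrm{cl}_\theta f(P\cap S):P\in\mathcal N(x)\}\subseteq V$. *)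

From mathcomp Require Import all_boot all_order.
From mathcomp Require Import all_classical topology.
Set Implicit Arguments. Unset Strict Implicit. Unset Printing Implicit Defensive.
Local Open Scope classical_set_scope.

Definition urysohn_space (Y : topologicalType) : Prop :=
  forall y1 y2 : Y, y1 <> y2 ->
    exists U1 U2 : set Y, [/\ open U1, U1 y1, open U2, U2 y2 &
                         closure U1 `&` closure U2 = set0].

Definition theta_closure (Y : topologicalType) (M : set Y) : set Y :=
  [set y | forall U : set Y, open U -> U y -> closure U `&` M !=set0].

(* X_theta(f^{-1}(V)) for f : S -> Y, S ⊆ X (f given as a function on X,
   only its values on S matter). *)
Definition X_theta (X Y : topologicalType) (S : set X) (f : X -> Y) (V : set Y)
  : set X :=
  [set x | \bigcap_(P in [set P : set X | open P /\ P x])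
             theta_closure (f @` (P `&` S)) `<=` V].

From mathcomp Require Import all_boot all_order.
From mathcomp Require Import all_classical topology.
Local Open Scope classical_set_scope.

(* Let K(x) be the theta-cluster set of f at x, the intersection over open
   neighbourhoods P of x of the theta-closures of f(P ∩ S), so that
   X_theta(f^-1(V)) = {x | K(x) ⊆ V}.  In a Urysohn space, a point towards
   which f converges at x is the only possible element of K(x).  The
   closed-family condition makes K(x) nonempty (apply it to the closures of
   the f(P ∩ S)) and at most a singleton (apply it to the disjoint closures of
   two Urysohn neighbourhoods).  So K(x) = {g x} for some g extending f, and
   then X_theta(f^-1(V)) = g^-1(V), which is open for all open V exactly when
   g is continuous.  Conversely a continuous extension g forces K(x) = {g x}. *)

Set Implicit Arguments.
Unset Strict Implicit.
Unset Printing Implicit Defensive.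

Definition theta_cluster (X Y : topologicalType) (S : set X) (f : X -> Y)
    (x : X) : set Y :=
  \bigcap_(P in open_nbhs x) theta_closure (f @` (P `&` S)).

Definition empty_caps_preserved (X Y : topologicalType) (S : set X)
    (f : X -> Y) : Prop :=
  forall (I : Type) (A : I -> set Y), (forall i, closed (A i)) ->
    \bigcap_(i in [set: I]) A i = set0 ->
    \bigcap_(i in [set: I]) closure (S `&` f @^-1` A i) = set0.

Lemma closure_sub_theta_closure (Y : topologicalType) (M : set Y) :
  closure M `<=` theta_closure M.
Proof.
move=> y My U oU Uy; have [z [Mz Uz]] := My U (open_nbhs_nbhs (conj oU Uy)).
by exists z; split => //; apply: subset_closure.
Qed.

Lemma closure_open_dense (X : topologicalType) (S P : set X) :
  dense S -> open P -> P `<=` closure (P `&` S).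
Proof.
move=> dS oP x Px B; rewrite nbhsE => -[O [oO Ox] OB].
have [z [[Oz Pz] Sz]] := dS (O `&` P) (ex_intro _ x (conj Ox Px)) (openI oO oP).
by exists z; split => //; apply: OB.
Qed.

Section ThetaCluster.
Variables (X Y : topologicalType) (S : set X) (f : X -> Y).

Lemma X_thetaE (V : set Y) : X_theta S f V = [set x | theta_cluster S f x `<=` V].
Proof. by []. Qed.

Lemma mem_theta_cluster (x : X) (y : Y) :
  (forall P U, open_nbhs x P -> open_nbhs y U ->
     exists2 z, (P `&` S) z & U (f z)) ->
  theta_cluster S f x y.
Proof.
move=> near_y P xP U oU Uy; have [z PSz Ufz] := near_y P U xP (conj oU Uy).
by exists (f z); split; [apply: subset_closure | exists z].
Qed.

Lemma theta_cluster_sub1 (x : X) (p : Y) : urysohn_space Y ->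
  (forall U, open_nbhs p U -> exists2 P, open_nbhs x P & P `&` S `<=` f @^-1` U) ->
  theta_cluster S f x `<=` [set p].
Proof.
move=> uY cvg_p y Ky; apply: contrapT => yp.
have [U1 [U2 [oU1 U1y oU2 U2p U12]]] := uY _ _ yp.
have [P xP PSU2] := cvg_p U2 (conj oU2 U2p).
have [z [U1z [t PSt tz]]] := Ky P xP U1 oU1 U1y.
suff : (closure U1 `&` closure U2) z by rewrite U12.
by split => //; rewrite -tz; apply/subset_closure/PSU2.
Qed.

Lemma theta_cluster_closure (x : X) (y : Y) (U : set Y) :
  theta_cluster S f x y -> open_nbhs y U -> closure (S `&` f @^-1` closure U) x.
Proof.
move=> Ky [oU Uy] B; rewrite nbhsE => -[O xO OB].
have [z [Uz [t [Ot St] tz]]] := Ky O xO U oU Uy.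
by exists t; split; [split; rewrite //= tz | apply: OB].
Qed.

Lemma theta_cluster_within_continuous (s : X) :
  urysohn_space Y -> {within S, continuous f} -> S s ->
  theta_cluster S f s = [set f s].
Proof.
move=> uY /subspace_continuousP fc Ss; apply/seteqP; split.
  apply: theta_cluster_sub1 => // U [oU Ufs].
  have := fc s Ss U (open_nbhs_nbhs (conj oU Ufs)).
  by rewrite nbhsE => -[P sP PU]; exists P => // z [Pz Sz]; apply: PU.
by move=> _ ->; apply: mem_theta_cluster => P U [_ Ps] [_ Ufs]; exists s.
Qed.

Section Extension.
Variables (g : X -> Y).
Hypotheses (gc : continuous g) (gf : forall s, S s -> g s = f s).

Lemma theta_cluster_extension (x : X) : urysohn_space Y -> dense S ->
  theta_cluster S f x = [set g x].
Proof.
move=> uY dS; apply/seteqP; split.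
  apply: theta_cluster_sub1 => // U [oU Ugx].
  exists (g @^-1` U); first by split => //; apply: (proj1 (continuousP g) gc).
  by move=> z [Uz Sz]; rewrite /= -gf.
move=> _ ->; apply: mem_theta_cluster => P U [oP Px] [oU Ugx].
have oPU : open (P `&` g @^-1` U) by apply/openI/(proj1 (continuousP g) gc).
have [z [[Pz Ugz] Sz]] := dS _ (ex_intro _ x (conj Px Ugx)) oPU.
by exists z; rewrite // -gf.
Qed.

Lemma closure_preimage_extension (A : set Y) : closed A ->
  closure (S `&` f @^-1` A) `<=` g @^-1` A.
Proof.
move=> cA; rewrite closureE; apply: smallest_sub.
  exact: (proj1 (continuous_closedP g) gc).
by move=> s [Ss Afs]; rewrite /= gf.
Qed.

End Extension.

Lemma X_theta_preimage (g : X -> Y) (V : set Y) :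
  (forall x, theta_cluster S f x = [set g x]) -> X_theta S f V = g @^-1` V.
Proof.
move=> Kg; rewrite X_thetaE; apply/seteqP; split => x /=; rewrite Kg.
  by apply.
by move=> Vgx _ ->.
Qed.

Section EmptyCaps.
Hypothesis caps : empty_caps_preserved S f.

Lemma empty_caps_preservedN (I : Type) (A : I -> set Y) (x : X) :
  (forall i, closed (A i)) -> (forall i, closure (S `&` f @^-1` A i) x) ->
  \bigcap_(i in [set: I]) A i !=set0.
Proof.
move=> cA xA; apply/set0P/eqP => A0.
by have := caps cA A0; rewrite -subset0; apply => i _; apply: xA.
Qed.

Lemma theta_cluster_neq0 (x : X) : dense S -> theta_cluster S f x !=set0.
Proof.
move=> dS.
pose A (P : {P : set X | open_nbhs x P}) := closure (f @` (sval P `&` S)).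
have [|y Ay] := @empty_caps_preservedN _ A x (fun=> @closed_closure _ _).
  move=> [P [oP Px]]; apply: (closureS _ (closure_open_dense dS oP Px)).
  by move=> z [Pz Sz]; split => //; apply/subset_closure; exists z.
by exists y => P xP; apply: closure_sub_theta_closure (Ay (exist _ P xP) I).
Qed.

Lemma theta_cluster_subsingleton (x : X) (y1 y2 : Y) : urysohn_space Y ->
  theta_cluster S f x y1 -> theta_cluster S f x y2 -> y1 = y2.
Proof.
move=> uY Ky1 Ky2; apply: contrapT => y12.
have [U1 [U2 [oU1 U1y oU2 U2y U12]]] := uY _ _ y12.
pose A (b : bool) := closure (if b then U1 else U2).
have [|y Ay] := @empty_caps_preservedN _ A x (fun=> @closed_closure _ _).
  by case; [apply: theta_cluster_closure Ky1 _ | apply: theta_cluster_closure Ky2 _].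
suff : (closure U1 `&` closure U2) y by rewrite U12.
by split; [apply: (Ay true) | apply: (Ay false)].
Qed.

Lemma theta_cluster_set1 : urysohn_space Y -> dense S ->
  exists g : X -> Y, forall x, theta_cluster S f x = [set g x].
Proof.
move=> uY dS; have [g Kg] := choice (fun x => theta_cluster_neq0 x dS).
exists g => x; apply/seteqP; split => [y Ky|_ ->] //.
exact: theta_cluster_subsingleton Ky (Kg x).
Qed.

End EmptyCaps.

End ThetaCluster.

Theorem corollary3p4 (X Y : topologicalType) (S : set X) (f : X -> Y) :
  urysohn_space Y -> dense S -> {within S, continuous f} ->
  ((exists g : X -> Y, continuous g /\ (forall s, S s -> g s = f s)) <->
   ((forall V : set Y, open V -> open (X_theta S f V)) /\
    (forall (I : Type) (A : I -> set Y), (forall i, closed (A i)) ->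
       \bigcap_(i in [set: I]) A i = set0 ->
       \bigcap_(i in [set: I]) closure (S `&` f @^-1` A i) = set0))).
Proof.
move=> uY dS fc; split.
- move=> [g [gc gf]]; have Kg x := theta_cluster_extension gc gf x uY dS.
  split => [V oV | I A cA A0].
    by rewrite (X_theta_preimage _ Kg); apply: (proj1 (continuousP g) gc).
  rewrite -subset0 => x xA; suff : (\bigcap_(i in [set: I]) A i) (g x) by rewrite A0.
  move=> i Ii; exact: (closure_preimage_extension gc gf (cA i) (xA i Ii)).
- move=> [theta_open caps]; have [g Kg] := theta_cluster_set1 caps uY dS.
  exists g; split.
    by apply/continuousP => V oV; rewrite -(X_theta_preimage _ Kg); apply: theta_open.
  move=> s Ss; have : theta_cluster S f s (g s) by rewrite Kg.
  by rewrite theta_cluster_within_continuous.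
Qed.
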